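(* Let $R_1$ and $R_2$ be commutative rings with nonzero identity, let $I_1$ be a proper ideal of $R_1$ and $I_2$ a proper ideal of $R_2$, and put $R=R_1\times R_2$ and $I=I_1\times I_2$. Then the graph $\Gamma''_{I}(R)$ is connected and $\operatorname{diam}(\Gamma''_{I}(R))\leq 3$.
   Context: All rings are commutative with nonzero identity; $R_1\times R_2$ has componentwise operations and $I_1\times I_2$ is an ideal of it. For a ring $R$ and an ideal $I$ of $R$, $\Gamma''_I(R)$ is the simple undirected graph whose vertex set is $\{x\in R\setminus I : xR+I\neq R\}$, and two distinct vertices $x,y$ are adjacent if and only if $x\notin yR+I$ and $y\notin xR+I$. A graph is connected if any two distinct vertices are joined by a path; the diameter is the supremum of the distances (lengths of shortest paths) between vertices. *)

From mathcomp Require Import all_boot all_algebra.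
Set Implicit Arguments. Unset Strict Implicit. Unset Printing Implicit Defensive.
Import GRing.Theory.
Local Open Scope ring_scope.

Record is_ideal (R : comNzRingType) (I : R -> Prop) : Prop := {
  ideal0 : I 0;
  idealD : forall x y, I x -> I y -> I (x + y);
  idealM : forall r x, I x -> I (r * x) }.

Definition is_proper_ideal (R : comNzRingType) (I : R -> Prop) : Prop :=
  is_ideal I /\ exists z, ~ I z.

Definition prod_ring (R1 R2 : comNzRingType) : comNzRingType := (R1 * R2)%type.

Definition prod_ideal (R1 R2 : comNzRingType) (I1 : R1 -> Prop) (I2 : R2 -> Prop)
  : prod_ring R1 R2 -> Prop := fun p => I1 p.1 /\ I2 p.2.

Definition in_xR_plus (R : comNzRingType) (I : R -> Prop) (x z : R) : Prop :=
  exists r i, I i /\ z = x * r + i.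

(* vertex set of Gamma''_I(R): x \notin I and xR + I <> R *)
Definition G2_vertex (R : comNzRingType) (I : R -> Prop) (x : R) : Prop :=
  ~ I x /\ ~ (forall z, in_xR_plus I x z).

Definition G2_adj (R : comNzRingType) (I : R -> Prop) (x y : R) : Prop :=
  G2_vertex I x /\ G2_vertex I y /\ x <> y /\
  ~ in_xR_plus I y x /\ ~ in_xR_plus I x y.

Fixpoint walk (T : Type) (adj : T -> T -> Prop) (n : nat) (x y : T) : Prop :=
  match n with
  | O => x = y
  | S n => exists z, adj x z /\ walk adj n z y
  end.

Definition graph_connected (T : Type) (V : T -> Prop) (adj : T -> T -> Prop) :=
  forall x y, V x -> V y -> x <> y -> exists n, walk adj n x y.

Definition diam_le (T : Type) (V : T -> Prop) (adj : T -> T -> Prop) (d : nat) :=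
  forall x y, V x -> V y -> exists n, (n <= d)%N /\ walk adj n x y.

(** The idempotents (1,0) and (0,1) of R1 x R2 are adjacent vertices, and
    every vertex x is adjacent to one of them: x ~ (0,1) as soon as x.1 is not
    in I1 and x.2 R2 + I2 <> R2, symmetrically for (1,0), and a vertex failing
    both conditions would lie in I or satisfy xR + I = R.  Any two vertices are
    therefore joined through the edge (1,0) - (0,1) by a walk of length <= 3. *)
From Stdlib Require Import Classical.
From mathcomp Require Import all_boot all_algebra.
Set Implicit Arguments. Unset Strict Implicit. Unset Printing Implicit Defensive.
Import GRing.Theory.
Local Open Scope ring_scope.

Lemma graph_connected_of_diam_le (T : Type) (V : T -> Prop) (adj : T -> T -> Prop) d :
  diam_le V adj d -> graph_connected V adj.
Proof. by move=> diamV x y Vx Vy _; have [n [_ w]] := diamV x y Vx Vy; exists n. Qed.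

Lemma diam_le3_of_dominating_edge (T : Type) (V : T -> Prop)
    (adj : T -> T -> Prop) (u v : T) :
  (forall x y, adj x y -> adj y x) -> adj u v ->
  (forall x, V x -> adj x u \/ adj x v) -> diam_le V adj 3.
Proof.
move=> adjC uv dom x y Vx Vy.
have walk2 a b c : adj a b -> adj b c -> walk adj 2 a c.
  by move=> ab bc; exists b; split=> //; exists c.
have walk3 a b c d : adj a b -> adj b c -> adj c d -> walk adj 3 a d.
  by move=> ab bc cd; exists b; split=> //; exact: walk2 bc cd.
case: (dom x Vx) => xw; case: (dom y Vy) => /adjC wy.
- by exists 2%N; split; last exact: walk2 xw wy.
- by exists 3%N; split; last exact: walk3 xw uv wy.
- by exists 3%N; split; last exact: walk3 xw (adjC _ _ uv) wy.
- by exists 2%N; split; last exact: walk2 xw wy.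
Qed.

Section IdealSums.

Variables (R : comNzRingType) (I : R -> Prop).

Lemma in_xR_plus0 z : in_xR_plus I 0 z <-> I z.
Proof.
split; first by case=> r [i [Ii ->]]; rewrite mul0r add0r.
by move=> Iz; exists 0, z; rewrite mul0r add0r.
Qed.

Lemma G2_adj_sym x y : G2_adj I x y -> G2_adj I y x.
Proof. by case=> Vx [Vy [/nesym yx [yxI xyI]]]. Qed.

Hypothesis idealI : is_ideal I.

Lemma in_xR_plus_all_of1 a : in_xR_plus I a 1 -> forall z, in_xR_plus I a z.
Proof.
case=> r [i [Ii E]] z; exists (r * z), (z * i); split; first exact: idealM.
by rewrite -[LHS]mul1r E mulrDl mulrA [z * i]mulrC.
Qed.

Lemma in_xR_plus_ideal a z : I a -> in_xR_plus I a z -> I z.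
Proof. by move=> Ia [r [i [Ii ->]]]; apply: idealD => //; rewrite mulrC; apply: idealM. Qed.

End IdealSums.

Lemma proper_ideal_not1 (R : comNzRingType) (I : R -> Prop) :
  is_proper_ideal I -> ~ I 1.
Proof. by case=> idealI [z Iz] I1; apply: Iz; rewrite -[z]mulr1; apply: idealM. Qed.

Lemma proper_ideal_not_all_in_xR_plus (R : comNzRingType) (I : R -> Prop) a :
  is_proper_ideal I -> I a -> ~ forall z, in_xR_plus I a z.
Proof. by case=> idealI [z Iz] Ia all_z; exact: Iz (in_xR_plus_ideal idealI Ia (all_z z)). Qed.

Section ProductRing.

Variables (R1 R2 : comNzRingType) (I1 : R1 -> Prop) (I2 : R2 -> Prop).
Local Notation I := (prod_ideal I1 I2).

Lemma in_xR_plus_prod (x z : prod_ring R1 R2) :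
  in_xR_plus I x z <-> in_xR_plus I1 x.1 z.1 /\ in_xR_plus I2 x.2 z.2.
Proof.
split.
  by case=> r [i [[Ii1 Ii2] ->]]; split; [exists r.1, i.1 | exists r.2, i.2].
case=> [[r1 [i1 [Ii1 E1]]] [r2 [i2 [Ii2 E2]]]].
exists ((r1, r2) : prod_ring R1 R2), ((i1, i2) : prod_ring R1 R2); split=> //.
by case: x z E1 E2 => a b [c d] /= -> ->.
Qed.

Lemma all_in_xR_plus_prod (x : prod_ring R1 R2) :
  (forall z, in_xR_plus I x z) <->
  (forall z1, in_xR_plus I1 x.1 z1) /\ (forall z2, in_xR_plus I2 x.2 z2).
Proof.
split=> [all_z | [all1 all2] z]; last exact/in_xR_plus_prod.
split=> [z1 | z2].
  by case: (proj1 (in_xR_plus_prod x (z1, 0)) (all_z _)).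
by case: (proj1 (in_xR_plus_prod x (0, z2)) (all_z _)).
Qed.

Hypotheses (properI1 : is_proper_ideal I1) (properI2 : is_proper_ideal I2).

Lemma G2_adj_prod01 (x : prod_ring R1 R2) :
  ~ I1 x.1 -> ~ (forall z2, in_xR_plus I2 x.2 z2) ->
  G2_adj I x ((0, 1) : prod_ring R1 R2).
Proof.
move=> I1x not_all2.
have vertex_x : G2_vertex I x.
  by split=> [[] // | /all_in_xR_plus_prod []].
have vertex01 : G2_vertex I ((0, 1) : prod_ring R1 R2).
  split=> [[_ /(proper_ideal_not1 properI2)] // | /all_in_xR_plus_prod [all1 _]].
  exact: proper_ideal_not_all_in_xR_plus properI1 (ideal0 properI1.1) all1.
split=> //; split=> //; split.
  by move=> x01; apply: I1x; rewrite x01; exact: ideal0 properI1.1.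
split; first by case/in_xR_plus_prod => /in_xR_plus0.
by case/in_xR_plus_prod=> _ /(in_xR_plus_all_of1 properI2.1).
Qed.

Lemma G2_adj_prod10 (x : prod_ring R1 R2) :
  ~ I2 x.2 -> ~ (forall z1, in_xR_plus I1 x.1 z1) ->
  G2_adj I x ((1, 0) : prod_ring R1 R2).
Proof.
move=> I2x not_all1.
have vertex_x : G2_vertex I x.
  by split=> [[] // | /all_in_xR_plus_prod []].
have vertex10 : G2_vertex I ((1, 0) : prod_ring R1 R2).
  split=> [[/(proper_ideal_not1 properI1)] // | /all_in_xR_plus_prod [_ all2]].
  exact: proper_ideal_not_all_in_xR_plus properI2 (ideal0 properI2.1) all2.
split=> //; split=> //; split.
  by move=> x10; apply: I2x; rewrite x10; exact: ideal0 properI2.1.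
split; first by case/in_xR_plus_prod => _ /in_xR_plus0.
by case/in_xR_plus_prod=> /(in_xR_plus_all_of1 properI1.1).
Qed.

Lemma G2_adj_prod10_01 :
  G2_adj I ((1, 0) : prod_ring R1 R2) ((0, 1) : prod_ring R1 R2).
Proof.
apply: G2_adj_prod01; first exact: proper_ideal_not1.
exact: proper_ideal_not_all_in_xR_plus properI2 (ideal0 properI2.1).
Qed.

Lemma G2_adj_prod10_or_01 (x : prod_ring R1 R2) : G2_vertex I x ->
  G2_adj I x ((1, 0) : prod_ring R1 R2) \/ G2_adj I x ((0, 1) : prod_ring R1 R2).
Proof.
case=> Ix /all_in_xR_plus_prod not_all.
have [all1 | not_all1] := classic (forall z1, in_xR_plus I1 x.1 z1).
  right; apply: G2_adj_prod01 => [I1x | all2]; last exact: not_all.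
  exact: proper_ideal_not_all_in_xR_plus properI1 I1x all1.
have [I2x | not_I2x] := classic (I2 x.2); first last.
  by left; exact: G2_adj_prod10.
right; apply: G2_adj_prod01 => [I1x | ]; first exact: Ix (conj I1x I2x).
exact: proper_ideal_not_all_in_xR_plus properI2 I2x.
Qed.

End ProductRing.

Theorem theorem2p9 (R1 R2 : comNzRingType) (I1 : R1 -> Prop) (I2 : R2 -> Prop) :
  is_proper_ideal I1 -> is_proper_ideal I2 ->
  graph_connected (G2_vertex (prod_ideal I1 I2)) (G2_adj (prod_ideal I1 I2)) /\
  diam_le (G2_vertex (prod_ideal I1 I2)) (G2_adj (prod_ideal I1 I2)) 3.
Proof.
move=> properI1 properI2.
have diam3 : diam_le (G2_vertex (prod_ideal I1 I2)) (G2_adj (prod_ideal I1 I2)) 3.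
  apply: diam_le3_of_dominating_edge (@G2_adj_sym _ _) _ _.
    exact: G2_adj_prod10_01.
  exact: G2_adj_prod10_or_01.
by split=> //; exact: graph_connected_of_diam_le diam3.
Qed.
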